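(* Let $k>500$, $\ln^3k/\sqrt k<\delta<1/100$, $d=300\lceil\ln k\rceil$, $\varepsilon=50\delta/\lceil\ln k\rceil$, and let $c^1,\dots,c^k\in G$ and $X$ be as in the context, and suppose they satisfy: (1) $\|c^i-c^j\|_2\ge\sqrt d/5$ for all $i\ne j$; and (2) for every path $\pi$ of length at most $\log_2k/4$, either $|F_{u(\pi)}|\le\sqrt k$, or every threshold cut that separates at least two data points of $X\cap u(\pi)$ damages at least $\varepsilon|F_{u(\pi)}|/2$ centers of $F_{u(\pi)}$. Then every threshold tree in which each leaf contains at most one of the centers $c^1,\dots,c^k$ has at least $2\delta k$ damaged centers, where a center $c^i$ is damaged by the tree if $c^i+\varepsilon\mathbf 1$ or $c^i-\varepsilon\mathbf 1$ lies in a different leaf from $c^i$.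
   Context: $G$ is the set of points of $[0,1]^d$ all of whose coordinates are nonnegative integer multiples of $\varepsilon$; $\mathbf{1}=(1,\dots,1)\in\mathbb{R}^d$. The data set (multiset) $X$ consists, for each $i$, of $k^2\lceil\ln^3k\rceil$ copies of $c^i$ together with $c^i+\varepsilon\mathbf{1}$ and $c^i-\varepsilon\mathbf{1}$. A threshold tree is a rooted binary tree of cells of $\mathbb{R}^d$ with root $\mathbb{R}^d$, each internal node $u$ split by a cut $(i,\xi)$ into $\{y\in u:y_i\le\xi\}$ and $\{y\in u:y_i>\xi\}$. A path $\pi$ is a finite sequence of triples $(i_j,\xi_j,\lambda_j)$ with $i_j\in\{1,\dots,d\}$, $\xi_j\in\mathbb{R}$, $\lambda_j\in\{\pm1\}$; its length is the number of triples; $u(\pi)$ is the set of $y$ with $y_{i_j}\le\xi_j$ when $\lambda_j=-1$ and $y_{i_j}>\xi_j$ when $\lambda_j=+1$, for all $j$. A center $c^i\in u(\pi)$ is damaged in $u(\pi)$ if $c^i\pm\varepsilon\mathbf 1\notin u(\pi)$ for some sign; $F_{u(\pi)}$ is the set of centers in $u(\pi)$ not damaged in $u(\pi)$. A cut $(i,\xi)$ separates two points if exactly one satisfies $y_i\le\xi$, and damages a center $c$ if it separates $c$ from $c+\varepsilon\mathbf1$ or from $c-\varepsilon\mathbf1$. *)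

From HB Require Import structures.
From mathcomp Require Import all_boot all_order all_algebra.
From mathcomp Require Import all_classical all_reals all_analysis.
Set Implicit Arguments. Unset Strict Implicit. Unset Printing Implicit Defensive.
Import Order.TTheory GRing.Theory Num.Theory.
Local Open Scope ring_scope.

Section Defs.
Variables (R : realType) (d : nat).

Definition pt := 'I_d -> R.

Definition shift (y : pt) (s : int) (eps : R) : pt :=
  fun j => y j + s%:~R * eps.

Definition dist2 (x y : pt) : R := Num.sqrt (\sum_(j < d) (x j - y j) ^+ 2).

Definition in_grid (eps : R) (x : pt) : Prop :=
  forall j, 0 <= x j <= 1 /\ exists n : nat, x j = n%:R * eps.

(* membership in the data set X (as a set; multiplicities are irrelevant here):
   X consists of copies of c^i, together with c^i + eps 1 and c^i - eps 1 *)
Definition inX (k : nat) (c : 'I_k -> pt) (eps : R) (p : pt) : Prop :=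
  exists i : 'I_k, p = c i \/ p = shift (c i) 1 eps \/ p = shift (c i) (-1) eps.

(* a path: sequence of triples (i, xi, lambda), lambda = true encodes +1,
   lambda = false encodes -1 *)
Definition cpath := seq ('I_d * R * bool).

Definition in_cell (pi : cpath) (y : pt) : bool :=
  all (fun t => let: (i, xi, lam) := t in
                if lam then xi < y i else y i <= xi) pi.

Definition damaged_in (pi : cpath) (eps : R) (y : pt) : bool :=
  in_cell pi y &&
  (~~ in_cell pi (shift y 1 eps) || ~~ in_cell pi (shift y (-1) eps)).

Definition Fset (k : nat) (c : 'I_k -> pt) (eps : R) (pi : cpath)
  : {set 'I_k} :=
  [set i | in_cell pi (c i) && ~~ damaged_in pi eps (c i)].

Definition separates (i : 'I_d) (xi : R) (y z : pt) : bool :=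
  (y i <= xi) != (z i <= xi).

Definition cut_damages (i : 'I_d) (xi : R) (eps : R) (y : pt) : bool :=
  separates i xi y (shift y 1 eps) || separates i xi y (shift y (-1) eps).

(* threshold trees: each internal node is a cut (i, xi); the left child is
   {y_i <= xi}, the right child is {y_i > xi}; the root is R^d *)
Inductive tree :=
  | Leaf
  | Node of 'I_d & R & tree & tree.

(* the address of the leaf containing y (two points lie in the same leaf iff
   their addresses coincide) *)
Fixpoint leaf_addr (t : tree) (y : pt) : seq bool :=
  match t with
  | Leaf => [::]
  | Node i xi l r =>
      if y i <= xi then false :: leaf_addr l y else true :: leaf_addr r y
  end.

Definition tree_damages (t : tree) (eps : R) (y : pt) : bool :=
  (leaf_addr t (shift y 1 eps) != leaf_addr t y) ||
  (leaf_addr t (shift y (-1) eps) != leaf_addr t y).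

End Defs.

From Pilot Require Import Defs.
From HB Require Import structures.
From mathcomp Require Import all_boot all_order all_algebra.
From mathcomp Require Import all_classical all_reals all_analysis.
From mathcomp Require Import lra.
Import Order.TTheory GRing.Theory Num.Theory.
Local Open Scope ring_scope.
Set Implicit Arguments. Unset Strict Implicit.

(* Call a centre of F_pi undamaged if the subtree below u(pi) keeps it in one leaf with
   both of its shifts c +- eps 1.  At a node whose cut separates two data points of the
   cell, condition (2) either makes F_pi small (at most sqrt k) or lets the cut itself
   damage eps |F_pi| / 2 centres; every other centre of F_pi passes, with its shifts, to
   F of one child.  A cut separating no data point sends all of F_pi to one child and
   can be skipped.  Induction on the tree, along m levels where (2) applies, gives
     eps/2 * (m * #undamaged - (2^m - 1)(sqrt k + 1)) <= #damaged,
   the additive loss doubling at each level.  At the root F is all k centres; with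
   m = floor(log_16 k) + 1 the loss is at most k/2 while eps * m >= 10 delta, so fewer
   than 2 delta k damaged centres would force more than 2.4 delta k of them. *)

Lemma card_indicator_sum3 (T : finType) (A B C D : {set T}) :
  (forall x, (x \in A) = (x \in B) + (x \in C) + (x \in D) :> nat)%N ->
  #|A| = (#|B| + #|C| + #|D|)%N.
Proof.
move=> split_x; rewrite -!sum1_card !(big_mkcond (fun x => x \in _)) -!big_split /=.
by apply: eq_bigr => x _; exact: split_x.
Qed.

Section TreeDamage.
Variables (R : realType) (d k : nat) (c : 'I_k -> pt R d) (eps : R).

Implicit Types (pi : cpath R d) (t l r : tree R d) (y : pt R d) (i : 'I_d) (j : 'I_k).

Local Notation F := (Fset c eps).
Local Notation shiftU y := (Defs.shift y 1 eps).
Local Notation shiftD y := (Defs.shift y (-1) eps).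

Definition cut_damagedF (i : 'I_d) (xi : R) (pi : cpath R d) : {set 'I_k} :=
  [set j in F pi | cut_damages i xi eps (c j)].

Definition tree_damagedF (t : tree R d) (pi : cpath R d) : {set 'I_k} :=
  [set j in F pi | tree_damages t eps (c j)].

Lemma in_FsetE pi j : (j \in F pi) =
  [&& in_cell pi (c j), in_cell pi (shiftU (c j)) & in_cell pi (shiftD (c j))].
Proof.
rewrite inE /damaged_in.
by case: (in_cell pi (c j)); case: (in_cell pi (shiftU (c j)));
  case: (in_cell pi (shiftD (c j))).
Qed.

Lemma in_cut_damagedF i xi pi j :
  (j \in cut_damagedF i xi pi) = (j \in F pi) && cut_damages i xi eps (c j).
Proof. by rewrite !inE. Qed.

Lemma in_tree_damagedF t pi j :
  (j \in tree_damagedF t pi) = (j \in F pi) && tree_damages t eps (c j).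
Proof. by rewrite !inE. Qed.

Lemma in_cell_cons pi i xi lam y :
  in_cell ((i, xi, lam) :: pi) y = (if lam then xi < y i else y i <= xi) && in_cell pi y.
Proof. by []. Qed.

Lemma leaf_addr_node i xi l r y :
  leaf_addr (Node i xi l r) y =
  if y i <= xi then false :: leaf_addr l y else true :: leaf_addr r y.
Proof. by []. Qed.

(* A centre of F_pi is either damaged by the cut or lies, with both shifts, on one side. *)
Lemma card_Fset_cut_split pi i xi :
  #|F pi| = (#|cut_damagedF i xi pi| + #|F ((i, xi, false) :: pi)|
             + #|F ((i, xi, true) :: pi)|)%N.
Proof.
apply: card_indicator_sum3 => j.
rewrite in_cut_damagedF !in_FsetE !in_cell_cons /cut_damages /separates !ltNge.
by case: (c j i <= xi); case: (shiftU (c j) i <= xi); case: (shiftD (c j) i <= xi);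
  case: (in_cell pi (c j)); case: (in_cell pi (shiftU (c j)));
  case: (in_cell pi (shiftD (c j))).
Qed.

Lemma card_tree_damagedF_node pi i xi l r :
  #|tree_damagedF (Node i xi l r) pi| =
  (#|cut_damagedF i xi pi| + #|tree_damagedF l ((i, xi, false) :: pi)|
   + #|tree_damagedF r ((i, xi, true) :: pi)|)%N.
Proof.
apply: card_indicator_sum3 => j.
rewrite !in_tree_damagedF in_cut_damagedF !in_FsetE !in_cell_cons.
rewrite /tree_damages !leaf_addr_node /cut_damages /separates !ltNge.
case: (c j i <= xi); case: (shiftU (c j) i <= xi); case: (shiftD (c j) i <= xi);
  case: (in_cell pi (c j)); case: (in_cell pi (shiftU (c j)));
  case: (in_cell pi (shiftD (c j)));
  by rewrite //= ?eqseq_cons ?eqxx ?andTb ?orbT ?addn0 ?add0n.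
Qed.

Lemma in_Fset_nil j : j \in F [::].
Proof. by rewrite in_FsetE. Qed.

Lemma card_Fset_nil : #|F [::]| = k.
Proof. by rewrite -[RHS]card_ord; apply: eq_card => j; rewrite in_Fset_nil. Qed.

Lemma tree_damagedF_nil t : tree_damagedF t [::] = [set j | tree_damages t eps (c j)].
Proof. by apply/setP => j; rewrite in_tree_damagedF in_Fset_nil !inE. Qed.

Lemma in_Fset_cons pi i xi lam j : j \in F ((i, xi, lam) :: pi) ->
  j \in F pi /\ (c j i <= xi) = ~~ lam.
Proof.
rewrite !in_FsetE !in_cell_cons => /and3P[/andP[side cj_in] /andP[_ cjU_in] /andP[_ cjD_in]].
by rewrite cj_in cjU_in cjD_in; case: lam side => [/lt_geF|->].
Qed.

Lemma leaf_addr_node_side i xi l r y lam : (y i <= xi) = ~~ lam ->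
  leaf_addr (Node i xi l r) y = lam :: leaf_addr (if lam then r else l) y.
Proof. by rewrite leaf_addr_node => ->; case: lam. Qed.

Lemma tree_damages_node_side i xi l r y lam :
  [/\ (y i <= xi) = ~~ lam, (shiftU y i <= xi) = ~~ lam & (shiftD y i <= xi) = ~~ lam] ->
  tree_damages (Node i xi l r) eps y = tree_damages (if lam then r else l) eps y.
Proof.
case=> y_side yU_side yD_side.
by rewrite /tree_damages !(leaf_addr_node_side l r y_side, leaf_addr_node_side l r yU_side,
  leaf_addr_node_side l r yD_side) !eqseq_cons eqxx.
Qed.

Definition leaves_separate t pi : Prop :=
  {in F pi &, injective (fun j => leaf_addr t (c j))}.

Lemma card_Fset_leaf pi : leaves_separate (Leaf R d) pi -> (#|F pi| <= 1)%N.
Proof. by move=> sep; apply/card_le1_eqP => j1 j2 j1F j2F; apply: sep. Qed.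

Lemma leaves_separate_cons i xi l r pi lam : leaves_separate (Node i xi l r) pi ->
  leaves_separate (if lam then r else l) ((i, xi, lam) :: pi).
Proof.
move=> sep j1 j2 /in_Fset_cons[j1F j1_side] /in_Fset_cons[j2F j2_side] /= same_leaf.
apply: sep => //.
by rewrite (leaf_addr_node_side l r j1_side) (leaf_addr_node_side l r j2_side) same_leaf.
Qed.

Definition splits_data pi i xi : Prop :=
  exists p q : pt R d,
    [/\ inX c eps p, inX c eps q, in_cell pi p, in_cell pi q & separates i xi p q].

Lemma same_side_of_nonsplitting pi i xi p q : ~ splits_data pi i xi ->
  inX c eps p -> inX c eps q -> in_cell pi p -> in_cell pi q -> (p i <= xi) = (q i <= xi).
Proof.
move=> nosplit Xp Xq p_in q_in; apply/eqP; apply: contra_notT nosplit => sep.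
by exists p, q.
Qed.

Lemma nonsplitting_side pi i xi : ~ splits_data pi i xi ->
  exists lam, forall j, j \in F pi ->
    [/\ (c j i <= xi) = ~~ lam, (shiftU (c j) i <= xi) = ~~ lam
      & (shiftD (c j) i <= xi) = ~~ lam].
Proof.
move=> nosplit; case: (set_0Vmem (F pi)) => [-> | [j0 j0F]].
  by exists true => j; rewrite inE.
exists (~~ (c j0 i <= xi)) => j; rewrite negbK.
have X0 : inX c eps (c j0) by exists j0; left.
have X1 : inX c eps (c j) by exists j; left.
have XU : inX c eps (shiftU (c j)) by exists j; right; left.
have XD : inX c eps (shiftD (c j)) by exists j; right; right.
move: j0F; rewrite !in_FsetE => /and3P[cj0_in _ _] /and3P[cj_in cjU_in cjD_in].
by split; apply: (same_side_of_nonsplitting nosplit).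
Qed.

Lemma nonsplitting_node_child i xi l r pi :
  ~ splits_data pi i xi -> leaves_separate (Node i xi l r) pi ->
  exists lam, tree_damagedF (Node i xi l r) pi = tree_damagedF (if lam then r else l) pi
              /\ leaves_separate (if lam then r else l) pi.
Proof.
move=> nosplit sep; have [lam sides] := nonsplitting_side nosplit.
exists lam; split.
  apply/setP => j; rewrite !in_tree_damagedF.
  by case jF: (j \in F pi) => //=; apply: tree_damages_node_side (sides j jF).
move=> j1 j2 j1F j2F /= same_leaf; apply: sep => //.
have [j1_side _ _] := sides j1 j1F; have [j2_side _ _] := sides j2 j2F.
by rewrite (leaf_addr_node_side l r j1_side) (leaf_addr_node_side l r j2_side) same_leaf.
Qed.

Definition cut_condition pi : Prop :=
  #|F pi|%:R <= Num.sqrt (k%:R : R) \/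
  forall i xi, splits_data pi i xi ->
    eps * #|F pi|%:R / 2 <= #|cut_damagedF i xi pi|%:R.

Lemma tree_damage_bound t m pi : 0 <= eps ->
  (forall pi', (size pi' < size pi + m)%N -> cut_condition pi') ->
  leaves_separate t pi ->
  eps / 2 * (m%:R * (#|F pi|%:R - #|tree_damagedF t pi|%:R)
             - ((2 ^ m)%:R - 1) * (Num.sqrt (k%:R : R) + 1))
    <= #|tree_damagedF t pi|%:R.
Proof.
move=> eps_ge0; have sqrt_ge0 : 0 <= Num.sqrt (k%:R : R) := sqrtr_ge0 _.
elim: t m pi => [|i xi l IHl r IHr] m pi cond sep.
  have -> : #|tree_damagedF (Leaf R d) pi| = 0%N.
    by apply: eq_card0 => j; rewrite in_tree_damagedF /tree_damages eqxx andbF.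
  have F_le1 : #|F pi|%:R <= 1 :> R by rewrite (ler_nat R _ 1) card_Fset_leaf.
  have m_lt : m%:R + 1 <= (2 ^ m)%:R :> R by rewrite natr1 ler_nat ltn_expl.
  have m_ge0 : 0 <= m%:R :> R := ler0n _ _.
  rewrite mulr0n subr0; apply: mulr_ge0_le0; first lra.
  have : 0 <= m%:R * (1 - #|F pi|%:R) :> R by apply: mulr_ge0; lra.
  have : 0 <= ((2 ^ m)%:R - 1) * Num.sqrt (k%:R : R) by apply: mulr_ge0; lra.
  lra.
case: (pselect (splits_data pi i xi)) => [splits | nosplit]; last first.
  have [lam [-> sep']] := nonsplitting_node_child nosplit sep.
  by case: lam sep' => sep'; [apply: IHr | apply: IHl].
case: m cond => [|m] cond.
  by rewrite expn0 subrr !mul0r subrr mulr0.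
have child_cond lam pi' : (size pi' < size ((i, xi, lam) :: pi) + m)%N -> cut_condition pi'.
  by move=> small; apply: cond; rewrite addnS.
have boundL := IHl m _ (child_cond false) (leaves_separate_cons (lam := false) sep).
have boundR := IHr m _ (child_cond true) (leaves_separate_cons (lam := true) sep).
have cut_bound : eps / 2 * (#|F pi|%:R - #|tree_damagedF (Node i xi l r) pi|%:R
                            - (Num.sqrt (k%:R : R) + 1)) <= #|cut_damagedF i xi pi|%:R.
  have g_ge0 : 0 <= #|tree_damagedF (Node i xi l r) pi|%:R :> R by [].
  have c_ge0 : 0 <= #|cut_damagedF i xi pi|%:R :> R by [].
  have : (size pi < size pi + m.+1)%N by rewrite addnS ltnS leq_addr.
  case/cond => [small | heavy].
    nra.
  have := heavy i xi splits; nra.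
move: cut_bound boundL boundR.
rewrite card_tree_damagedF_node (card_Fset_cut_split pi i xi) !natrD expnS natrM -natr1.
lra.
Qed.

End TreeDamage.

Lemma expn2_le_ln (R : realType) (n k : nat) : (0 < k)%N ->
  (2 ^ n <= k)%N = (n%:R * ln (2 : R) <= ln (k%:R : R)).
Proof.
move=> k_gt0.
by rewrite -(ler_nat R) natrX mulr_natl -lnXn // ler_ln ?posrE ?exprn_gt0 ?ltr0n.
Qed.

Lemma ln2_le1 (R : realType) : ln (2 : R) <= 1.
Proof. by have := expR_ge1Dx (ln (2 : R)); rewrite lnK ?posrE; lra. Qed.

Lemma size_le_log16 (R : realType) (s k : nat) : (16 ^ s <= k)%N ->
  s%:R <= ln (k%:R : R) / ln 2 / 4.
Proof.
move=> s_small; have k_gt0 : (0 < k)%N by apply: leq_trans s_small; rewrite expn_gt0.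
have ln2_gt0 : 0 < ln (2 : R) by apply: ln_gt0; lra.
have : (2 ^ (4 * s) <= k)%N by rewrite expnM.
rewrite (expn2_le_ln R) // natrM => le_ln.
by rewrite ler_pdivlMr // ler_pdivlMr //; lra.
Qed.

Lemma ln_lt_trunc_log16 (R : realType) (k : nat) : (0 < k)%N ->
  ln (k%:R : R) < 4 * (trunc_log 16 k).+1%:R.
Proof.
move=> k_gt0; have : (k < 2 ^ (4 * (trunc_log 16 k).+1))%N by rewrite expnM trunc_log_ltn.
rewrite ltnNge (expn2_le_ln R) // -ltNge natrM.
have := ln2_le1 R; have : 0 <= (trunc_log 16 k).+1%:R :> R := ler0n _ _; nra.
Qed.

Lemma expn2_sqrt_bound (R : realType) (n k : nat) : (500 < k)%N -> (16 ^ n <= k)%N ->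
  4 * (2 ^ n)%:R * (Num.sqrt (k%:R : R) + 1) <= k%:R.
Proof.
move=> k_gt500 n_small.
set S := Num.sqrt (k%:R : R); set q : R := (2 ^ n)%:R.
have S2 : S ^+ 2 = k%:R by rewrite sqr_sqrtr ?ler0n.
have S_ge0 : 0 <= S by apply: sqrtr_ge0.
have S_ge22 : 22 <= S.
  have : 501 <= S ^+ 2 by rewrite S2 ler_nat.
  nra.
have q4 : q ^+ 4 <= S ^+ 2.
  by rewrite S2 /q -natrX -expnM mulnC expnM ler_nat.
have q_ge1 : 1 <= q by rewrite ler1n expn_gt0.
have [n_le2 | n_gt2] := leqP n 2.
  have : q <= 4 by rewrite /q (_ : 4 = (2 ^ 2)%:R) // ler_nat leq_pexp2l.
  nra.
have q_ge8 : 8 <= q by rewrite /q (_ : 8 = (2 ^ 3)%:R) // ler_nat leq_pexp2l.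
have q2_le : 64 * q ^+ 2 <= S ^+ 2.
  apply: le_trans q4; rewrite (exprD q 2 2) ler_wpM2r ?exprn_ge0 //; nra.
have q_le : 8 * q <= S by nra.
nra.
Qed.

Lemma damage_lower_bound_arith (R : realType) (delta eps M k D S : R) :
  0 < delta -> delta < 1 / 100 -> 1 <= M -> 10 * delta <= eps * M -> 0 < k ->
  2 * S <= k -> eps / 2 * (M * (k - D) - S) <= D -> 2 * delta * k <= D.
Proof.
move=> delta_gt0 delta_lt M_ge1 epsM k_gt0 S_le bound.
rewrite leNgt; apply/negP => D_lt.
have eps_gt0 : 0 < eps by nra.
have undamaged : 48 / 100 * M * k <= M * (k - D) - S.
  have D_small : D < k / 50 by nra.
  have : M * (98 / 100 * k) <= M * (k - D) by apply: ler_wpM2l; lra.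
  have : k <= M * k by nra.
  lra.
have : eps / 2 * (48 / 100 * M * k) <= D.
  apply: le_trans bound; apply: ler_wpM2l; lra.
nra.
Qed.

Theorem lemma10 (R : realType) (k : nat) (delta : R) (d : nat) (eps : R)
  (c : 'I_k -> pt R d) :
  (500 < k)%N ->
  (ln (k%:R : R)) ^+ 3 / Num.sqrt (k%:R : R) < delta ->
  delta < 1 / 100 ->
  d = (300 * `|Num.ceil (ln (k%:R : R))|)%N ->
  eps = 50 * delta / (Num.ceil (ln (k%:R : R)))%:~R ->
  (forall i, in_grid eps (c i)) ->
  (* (1) *)
  (forall i j, i != j -> Num.sqrt (d%:R : R) / 5 <= dist2 (c i) (c j)) ->
  (* (2) *)
  (forall pi : cpath R d,
     (size pi)%:R <= ln (k%:R : R) / ln (2 : R) / 4 ->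
     (#|Fset c eps pi|%:R <= Num.sqrt (k%:R : R)) \/
     (forall (i : 'I_d) (xi : R),
        (exists p q : pt R d,
           [/\ inX c eps p, inX c eps q, in_cell pi p, in_cell pi q
             & separates i xi p q]) ->
        eps * #|Fset c eps pi|%:R / 2 <=
          #|[set j in Fset c eps pi | cut_damages i xi eps (c j)]|%:R)) ->
  forall t : tree R d,
    (forall i j, i != j -> leaf_addr t (c i) != leaf_addr t (c j)) ->
    2 * delta * k%:R <= #|[set i | tree_damages t eps (c i)]|%:R.
Proof.
move=> k_gt500 delta_gt delta_lt _ eps_def _ _ cond t sep.
have k_gt0 : (0 < k)%N by apply: leq_trans k_gt500.
set x := ln (k%:R : R) in delta_gt eps_def cond *.
have x_gt0 : 0 < x by apply: ln_gt0; rewrite ltr1n; apply: leq_trans k_gt500.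
have delta_gt0 : 0 < delta.
  by apply: le_lt_trans delta_gt; rewrite divr_ge0 ?sqrtr_ge0 ?exprn_ge0 ?ltW.
set M := (trunc_log 16 k).+1.
have M_small : (16 ^ M.-1 <= k)%N := trunc_logP (isT : (1 < 16)%N) k_gt0.
have M_ge1 : 1 <= M%:R :> R by rewrite ler1n.
have x_lt : x < 4 * M%:R := ln_lt_trunc_log16 R k_gt0.
have /andP[C_gt C_ge] := ceil_itv x.
set C : R := (Num.ceil x)%:~R in C_ge eps_def.
have C_lt : C < x + 1 by move: C_gt; rewrite intrD /=; lra.
have eps_ge0 : 0 <= eps by rewrite eps_def divr_ge0 //; lra.
have short_cond pi : (size pi < size ([::] : cpath R d) + M)%N -> cut_condition c eps pi.
  move=> short; apply/cond/size_le_log16.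
  by apply: leq_trans M_small; rewrite leq_pexp2l.
have root_sep : leaves_separate c eps t [::].
  by move=> i j _ _ /= same_leaf; case: (eqVneq i j) => // /sep; rewrite same_leaf eqxx.
have := tree_damage_bound eps_ge0 short_cond root_sep.
rewrite card_Fset_nil tree_damagedF_nil.
apply: (damage_lower_bound_arith delta_gt0 delta_lt M_ge1) => //.
- by rewrite eps_def mulrAC ler_pdivlMr; [nra | lra].
- by rewrite ltr0n.
- have := expn2_sqrt_bound R k_gt500 M_small.
  by rewrite expnS natrM; have := sqrtr_ge0 (k%:R : R); nra.
Qed.
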